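(* Let $k\ge 1$ and let $G$ and $H$ be graphs with $\delta(G)\ge\delta(H)\ge k$. Then \[ \Gamma_{\times k,t}(G\times H)\ge\max\{\Gamma_{\times k,t}(G)\cdot\Gamma_t(H),\ \Gamma_{\times k,t}(H)\cdot\Gamma_t(G)\}. \]
   Context: For an integer $k\ge1$ and a graph $G$ with $\delta(G)\ge k$, a set $S\subseteq V(G)$ is a $k$-tuple total dominating set ($k$TDS) if $|N_G(x)\cap S|\ge k$ for every $x\in V(G)$, and $\Gamma_{\times k,t}(G)$ is the maximum cardinality of a minimal (with respect to inclusion) $k$TDS of $G$. $\Gamma_t(G)=\Gamma_{\times 1,t}(G)$ is the upper total domination number. The cross (direct) product $G\times H$ has vertex set $V(G)\times V(H)$, with $(g_1,h_1)\sim(g_2,h_2)$ iff $g_1g_2\in E(G)$ and $h_1h_2\in E(H)$. *)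

From mathcomp Require Import all_boot.
Set Implicit Arguments. Unset Strict Implicit. Unset Printing Implicit Defensive.

Record sgraph (T : finType) := SGraph {
  adj : rel T;
  adj_sym : symmetric adj;
  adj_irrefl : irreflexive adj }.

Definition nbhd (T : finType) (G : sgraph T) (x : T) : {set T} := [set y | adj G x y].

(* minimum degree delta(G) (equals #|T| = 0 for the empty graph) *)
Definition mindeg (T : finType) (G : sgraph T) : nat :=
  \big[minn/#|T|]_(x : T) #|nbhd G x|.

Definition is_kTDS (T : finType) (G : sgraph T) (k : nat) (S : {set T}) : bool :=
  [forall x, k <= #|nbhd G x :&: S|].

Definition is_min_kTDS (T : finType) (G : sgraph T) (k : nat) (S : {set T}) : bool :=
  is_kTDS G k S && [forall S' : {set T}, (S' \proper S) ==> ~~ is_kTDS G k S'].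

Definition upper_kTDN (T : finType) (G : sgraph T) (k : nat) : nat :=
  \max_(S : {set T} | is_min_kTDS G k S) #|S|.

Definition upper_TDN (T : finType) (G : sgraph T) : nat := upper_kTDN G 1.

Definition cross_adj (T U : finType) (G : sgraph T) (H : sgraph U) : rel (T * U)%type :=
  fun p q => adj G p.1 q.1 && adj H p.2 q.2.

Lemma cross_adj_sym (T U : finType) (G : sgraph T) (H : sgraph U) :
  symmetric (cross_adj G H).
Proof. by move=> p q; rewrite /cross_adj (adj_sym G) (adj_sym H). Qed.

Lemma cross_adj_irrefl (T U : finType) (G : sgraph T) (H : sgraph U) :
  irreflexive (cross_adj G H).
Proof. by move=> p; rewrite /cross_adj (adj_irrefl G). Qed.

Definition cross (T U : finType) (G : sgraph T) (H : sgraph U) : sgraph (T * U)%type :=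
  @SGraph _ (cross_adj G H) (@cross_adj_sym T U G H) (@cross_adj_irrefl T U G H).

From mathcomp Require Import all_boot.
From mathcomp Require Import zify.

Set Implicit Arguments.
Unset Strict Implicit.
Unset Printing Implicit Defensive.

(* A kTDS S is minimal iff every s in S has a "critical" witness x: a vertex
   adjacent to s that is dominated exactly k times by S.  For minimal kTDSs
   A of G and B of H, a critical witness x of a and y of b give the critical
   witness (x, y) of (a, b) for A x B in G x H, since N(x, y) cuts A x B in
   (N(x) cut A) x (N(y) cut B).  Hence A x B is a minimal (k1 k2)TDS of the
   cross product; taking k1 = k, k2 = 1 and vice versa gives both bounds. *)

Section MinimalKTDS.

Variables (T : finType) (G : sgraph T) (k : nat).

Definition critical_for (S : {set T}) (s x : T) : Prop :=
  s \in nbhd G x /\ #|nbhd G x :&: S| = k.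

Lemma min_kTDS_critical (S : {set T}) :
  is_min_kTDS G k S -> forall s, s \in S -> exists x, critical_for S s x.
Proof.
case/andP=> /forallP dom /forallP minS s sS.
have := implyP (minS (S :\ s)) (properD1 sS).
rewrite /is_kTDS negb_forall => /existsP[x]; rewrite -ltnNge setIDA => lt_k.
have := cardsD1 s (nbhd G x :&: S); have := dom x.
case: (boolP (s \in nbhd G x :&: S)) => [/setIP[sN _] | _] /=; last by lia.
by exists x; split=> //; lia.
Qed.

Lemma critical_min_kTDS (S : {set T}) :
  is_kTDS G k S -> (forall s, s \in S -> exists x, critical_for S s x) ->
  is_min_kTDS G k S.
Proof.
move=> dom crit; apply/andP; split=> //; apply/forallP=> S'; apply/implyP.
case/properP=> subS' [s sS sNS'].
have [x [sN card_k]] := crit s sS.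
rewrite /is_kTDS negb_forall; apply/existsP; exists x; rewrite -ltnNge -card_k.
apply/proper_card/properP; split; first exact: setIS.
by exists s; rewrite !inE ?sS ?andbT //; move: sN; rewrite inE => ->.
Qed.

Lemma leq_upper_kTDN (S : {set T}) : is_min_kTDS G k S -> #|S| <= upper_kTDN G k.
Proof. exact: (leq_bigmax_cond (F := fun S : {set T} => #|S|)). Qed.

End MinimalKTDS.

Lemma nbhd_crossIX (T U : finType) (G : sgraph T) (H : sgraph U) x y A B :
  nbhd (cross G H) (x, y) :&: setX A B = setX (nbhd G x :&: A) (nbhd H y :&: B).
Proof.
apply/setP=> [[a b]]; rewrite !inE /cross /cross_adj /=.
by case: (adj G x a); case: (adj H y b); case: (a \in A); case: (b \in B).
Qed.

Lemma min_kTDS_crossX (T U : finType) (G : sgraph T) (H : sgraph U) k1 k2 A B :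
  is_min_kTDS G k1 A -> is_min_kTDS H k2 B ->
  is_min_kTDS (cross G H) (k1 * k2) (setX A B).
Proof.
move=> minA minB; apply: critical_min_kTDS.
  move: minA minB => /andP[/forallP domA _] /andP[/forallP domB _].
  by apply/forallP=> -[x y]; rewrite nbhd_crossIX cardsX leq_mul.
move=> [a b] /setXP[aA bB].
have [x [aN card_x]] := min_kTDS_critical minA aA.
have [y [bN card_y]] := min_kTDS_critical minB bB.
exists (x, y); split; last by rewrite nbhd_crossIX cardsX card_x card_y.
by move: aN bN; rewrite !inE /cross /cross_adj /= => -> ->.
Qed.

Lemma bigmax_mul_leq (I J : finType) (P : pred I) (Q : pred J) (F : I -> nat)
    (G : J -> nat) M :
  (forall i j, P i -> Q j -> F i * G j <= M) ->
  (\max_(i | P i) F i) * (\max_(j | Q j) G j) <= M.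
Proof.
move=> leM.
rewrite (big_morph (fun m => m * _) (fun a b => maxnMl a b _) (mul0n _)).
apply/bigmax_leqP=> i Pi.
rewrite mulnC (big_morph (fun m => m * _) (fun a b => maxnMl a b _) (mul0n _)).
by apply/bigmax_leqP=> j Qj; rewrite mulnC leM.
Qed.

Lemma upper_kTDN_cross (T U : finType) (G : sgraph T) (H : sgraph U) k1 k2 :
  upper_kTDN G k1 * upper_kTDN H k2 <= upper_kTDN (cross G H) (k1 * k2).
Proof.
apply: bigmax_mul_leq => A B minA minB.
by rewrite -cardsX leq_upper_kTDN // min_kTDS_crossX.
Qed.

(* The degree hypotheses only guarantee that the maxima are taken over
   nonempty families; the inequality holds without them. *)
Theorem mainTheorem14 (T U : finType) (G : sgraph T) (H : sgraph U) (k : nat) :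
  1 <= k ->
  mindeg H <= mindeg G ->
  k <= mindeg H ->
  maxn (upper_kTDN G k * upper_TDN H) (upper_kTDN H k * upper_TDN G)
    <= upper_kTDN (cross G H) k.
Proof.
move=> _ _ _; rewrite geq_max /upper_TDN; apply/andP; split.
  by rewrite -{2}[k]muln1 upper_kTDN_cross.
by rewrite mulnC -{2}[k]mul1n upper_kTDN_cross.
Qed.
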